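(* Let $n\ge1$ and $t\ge1$ be integers, and let $\Gamma_{\le t}=\{a\subseteq[n]: 0<|a|\le t\}$. Let $M_t$ be the real matrix with rows and columns indexed by $\Gamma_{\le t}$ and entries $M_t[a,b]=2^{|a\cap b|}$. Then $M_t$ is positive definite. *)

From mathcomp Require Import all_boot all_order all_algebra.
From mathcomp Require Import reals.
Set Implicit Arguments. Unset Strict Implicit. Unset Printing Implicit Defensive.
Import Order.TTheory GRing.Theory Num.Theory.
Local Open Scope ring_scope.

Definition Gamma_le (n t : nat) : {pred {set 'I_n}} :=
  [pred a : {set 'I_n} | (0 < #|a|)%N && (#|a| <= t)%N].

Definition GammaT (n t : nat) : finType :=
  @sig {set 'I_n} (fun a => a \in @Gamma_le n t).

Definition Mt (R : realType) (n t : nat) : 'M[R]_#|{: GammaT n t}| :=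
  \matrix_(i, j) (2%:R ^+ #|val (enum_val i) :&: val (enum_val j)|).

Definition posdef (R : realType) (m : nat) (A : 'M[R]_m) : Prop :=
  A^T = A /\ forall x : 'cV[R]_m, x != 0 -> 0 < (x^T *m A *m x) ord0 ord0.

From mathcomp Require Import all_boot all_order all_algebra.
From mathcomp Require Import reals.
From mathcomp Require Import ring.
Set Implicit Arguments. Unset Strict Implicit. Unset Printing Implicit Defensive.
Import Order.TTheory GRing.Theory Num.Theory.
Local Open Scope ring_scope.

(* Counting the subsets of [a :&: b] gives [2 ^ |a :&: b| = \sum_c [c <= a] [c <= b]],
   so [M_t] is the Gram matrix of the inclusion vectors [(c \subset a)_c] and
   [x^T M_t x = \sum_c (\sum_(a \supseteq c) x_a)^2].  If [x != 0], choose [a] of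
   maximal size with [x_a != 0]: the term [c = a] of this sum is [x_a^2 > 0], since
   [a] is the only superset of itself in the support of [x]. *)

Lemma exp2_card_setI (R : pzSemiRingType) (T : finType) (A B : {set T}) :
  2%:R ^+ #|A :&: B| = \sum_(C : {set T}) (C \subset A)%:R * (C \subset B)%:R :> R.
Proof.
rewrite -natrX -card_powerset -sum1_card natr_sum big_mkcond /=.
apply: eq_bigr => C _; rewrite powersetE subsetI.
by case: (C \subset A); case: (C \subset B); rewrite /= ?mulr1 ?mulr0.
Qed.

Section SubsetGram.

Variables (T : finType) (m : nat) (f : 'I_m -> {set T}).

Definition subset_gram (R : pzSemiRingType) : 'M[R]_m :=
  \matrix_(i, j) (2%:R ^+ #|f i :&: f j|).

Lemma tr_subset_gram (R : pzSemiRingType) : (subset_gram R)^T = subset_gram R.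
Proof. by apply/matrixP => i j; rewrite !mxE setIC. Qed.

Lemma subset_gram_quadE (R : comPzRingType) (x : 'cV[R]_m) :
  (x^T *m subset_gram R *m x) 0 0 =
  \sum_(C : {set T}) (\sum_i (C \subset f i)%:R * x i 0) ^+ 2.
Proof.
rewrite mxE.
under eq_bigr => j _ do rewrite mxE big_distrl /=.
under eq_bigr => j _ do under eq_bigr => i _ do
  rewrite !mxE exp2_card_setI big_distrr big_distrl /=.
under eq_bigr => j _ do rewrite exchange_big /=.
rewrite exchange_big /=; apply: eq_bigr => C _.
rewrite expr2 big_distrl /=; apply: eq_bigr => j _.
rewrite big_distrr /=; apply: eq_bigr => i _ /=; ring.
Qed.

Hypothesis f_inj : injective f.

Lemma sum_supsets_of_max (R : pzSemiRingType) (x : 'cV[R]_m) (k : 'I_m) :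
  (forall i, x i 0 != 0 -> (#|f i| <= #|f k|)%N) ->
  \sum_i (f k \subset f i)%:R * x i 0 = x k 0.
Proof.
move=> kmax; rewrite (bigD1 k) //= subxx mul1r big1 ?addr0 // => i ik.
have [->|xi0] := eqVneq (x i 0) 0; first by rewrite mulr0.
suff /negPf-> : ~~ (f k \subset f i) by rewrite mul0r.
apply: contra ik => fki; apply/eqP/f_inj/eqP.
by rewrite eq_sym eqEcard fki kmax.
Qed.

Lemma subset_gram_quad_gt0 (R : realDomainType) (x : 'cV[R]_m) :
  x != 0 -> 0 < (x^T *m subset_gram R *m x) 0 0.
Proof.
case/cV0Pn=> i0 xi0.
have [k xk0 kmax] := @arg_maxnP _ i0 (fun i => x i 0 != 0) (fun i => #|f i|) xi0.
rewrite subset_gram_quadE (bigD1 (f k)) //= sum_supsets_of_max //.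
by apply: ltr_pwDl; [rewrite exprn_even_gt0 | apply: sumr_ge0 => C _; apply: sqr_ge0].
Qed.

Lemma subset_gram_posdef (R : realType) : posdef (subset_gram R).
Proof. by split; [exact: tr_subset_gram | exact: subset_gram_quad_gt0]. Qed.

End SubsetGram.

Theorem lemma6 (R : realType) (n t : nat) (hn : (1 <= n)%N) (ht : (1 <= t)%N) :
  posdef (Mt R n t).
Proof.
apply: (@subset_gram_posdef _ _ (fun i => val (enum_val i))).
by move=> i j /val_inj/enum_val_inj.
Qed.
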